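(* Let $n$ be a positive integer. For any finite simple graph $H$, the strong product $K_n \boxtimes H$ is well-dominated if and only if $H$ is well-dominated.
   Context: A set $D$ of vertices of a graph is dominating if every vertex is in $D$ or adjacent to a vertex of $D$. A graph is well-dominated if every minimal (with respect to inclusion) dominating set is a minimum dominating set. The strong product $G\boxtimes H$ has vertex set $V(G)\times V(H)$, with distinct $(g_1,h_1)$ and $(g_2,h_2)$ adjacent iff ($g_1=g_2$ and $h_1h_2\in E(H)$), or ($h_1=h_2$ and $g_1g_2\in E(G)$), or ($g_1g_2\in E(G)$ and $h_1h_2\in E(H)$). *)

From mathcomp Require Import all_boot.
Set Implicit Arguments. Unset Strict Implicit. Unset Printing Implicit Defensive.

Definition simple_graph (T : finType) (e : rel T) : Prop :=
  symmetric e /\ irreflexive e.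

Definition dominating (T : finType) (e : rel T) (D : {set T}) : bool :=
  [forall v, (v \in D) || [exists u in D, e v u]].

Definition minimal_dominating (T : finType) (e : rel T) (D : {set T}) : bool :=
  minset (dominating e) D.

Definition minimum_dominating (T : finType) (e : rel T) (D : {set T}) : bool :=
  dominating e D && [forall D' : {set T}, dominating e D' ==> (#|D| <= #|D'|)].

Definition well_dominated (T : finType) (e : rel T) : Prop :=
  forall D : {set T}, minimal_dominating e D -> minimum_dominating e D.

Definition complete_rel (n : nat) : rel 'I_n := fun i j => i != j.

Definition strong_prod (G H : finType) (eG : rel G) (eH : rel H) : rel (G * H) :=
  fun x y =>
    (x != y) &&
    [&& (x.1 == y.1) || eG x.1 y.1 & (x.2 == y.2) || eH x.2 y.2].

From mathcomp Require Import all_boot.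

(* Domination only sees closed neighbourhoods N[v].  In K_n ⊠ H the closed
   neighbourhood of (i, v) is 'I_n × N_H[v], so the projection onto H turns
   dominating sets of the product into dominating sets of H and back, and a
   minimal dominating set of the product meets each fibre at most once (two
   points of one fibre have the same closed neighbourhood, so one of them is
   redundant).  Hence minimal dominating sets, and their sizes, correspond. *)

Set Implicit Arguments.
Unset Strict Implicit.
Unset Printing Implicit Defensive.

Definition closed_adj (T : finType) (e : rel T) : rel T :=
  fun v u => (v == u) || e v u.

Lemma dominatingP (T : finType) (e : rel T) (D : {set T}) :
  reflect (forall v, exists2 u, u \in D & closed_adj e v u) (dominating e D).
Proof.
apply: (iffP forallP) => [dD v | dD v].
  case/orP: (dD v) => [vD | /existsP[u /andP[uD evu]]].
    by exists v; rewrite // /closed_adj eqxx.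
  by exists u; rewrite // /closed_adj evu orbT.
have [u uD /orP[/eqP -> | evu]] := dD v; first by rewrite uD.
by apply/orP; right; apply/existsP; exists u; rewrite uD.
Qed.

Section ClosedNeighbourhoodProjection.

Variables (T U : finType) (eT : rel T) (eU : rel U).
Variables (p : T -> U) (s : U -> T).
Hypothesis sK : cancel s p.
Hypothesis closed_adj_proj :
  forall x y, closed_adj eT x y = closed_adj eU (p x) (p y).

Lemma dominating_proj (D : {set T}) :
  dominating eT D = dominating eU (p @: D).
Proof.
apply/dominatingP/dominatingP => dD v.
  have [u uD vu] := dD (s v).
  by exists (p u); [exact: imset_f | rewrite -[v]sK -closed_adj_proj].
have [_ /imsetP[u uD ->] vu] := dD (p v).
by exists u; rewrite // closed_adj_proj.
Qed.

Lemma proj_lift (S : {set U}) : p @: (s @: S) = S.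
Proof. by rewrite -imset_comp (eq_imset _ sK) imset_id. Qed.

Lemma dominating_lift (S : {set U}) : dominating eT (s @: S) = dominating eU S.
Proof. by rewrite dominating_proj proj_lift. Qed.

Lemma card_lift (S : {set U}) : #|s @: S| = #|S|.
Proof. exact/card_imset/(can_inj sK). Qed.

Lemma minimal_dominating_lift (S : {set U}) :
  minimal_dominating eU S -> minimal_dominating eT (s @: S).
Proof.
case/minsetP=> dS minS; apply/minsetP; split=> [|D dD sDS].
  by rewrite dominating_lift.
rewrite dominating_proj in dD.
have pDS : p @: D = S by apply: minS; rewrite // -[S]proj_lift imsetS.
by apply/eqP; rewrite eqEcard sDS card_lift -pDS leq_imset_card.
Qed.

Lemma minimal_dominating_proj (D : {set T}) :
  minimal_dominating eT D -> minimal_dominating eU (p @: D).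
Proof.
case/minsetP=> dD minD; apply/minsetP; split=> [|S dS sSD].
  by rewrite -dominating_proj.
have pDS : p @: (D :&: p @^-1: S) = S.
  apply/setP=> v; apply/imsetP/idP => [[u] | vS].
    by rewrite !inE => /andP[_ uS] ->.
  have /imsetP[u uD puv] := subsetP sSD v vS.
  by exists u; rewrite // !inE uD -puv vS.
have DS : D :&: p @^-1: S = D.
  by apply: minD (subsetIl _ _); rewrite dominating_proj pDS.
by rewrite -[in RHS]DS pDS.
Qed.

Lemma card_proj_minimal_dominating (D : {set T}) :
  minimal_dominating eT D -> #|p @: D| = #|D|.
Proof.
case/minsetP=> dD minD; apply: card_in_imset => x y xD yD pxy.
apply/eqP/negPn/negP => neq_xy.
have pDx : p @: (D :\ x) = p @: D.
  apply/eqP; rewrite eqEsubset imsetS ?subsetDl //=.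
  apply/subsetP=> _ /imsetP[u uD ->]; apply/imsetP.
  have [-> | neq_ux] := eqVneq u x.
    by exists y; rewrite // !inE yD eq_sym neq_xy.
  by exists u; rewrite // !inE neq_ux.
have dDx : dominating eT (D :\ x) by rewrite dominating_proj pDx -dominating_proj.
have /setP/(_ x) := minD _ dDx (subsetDl D [set x]).
by rewrite !inE eqxx xD.
Qed.

Lemma minimum_dominating_unlift (S : {set U}) :
  minimum_dominating eT (s @: S) -> minimum_dominating eU S.
Proof.
case/andP; rewrite dominating_lift => dS /forallP minS.
apply/andP; split=> //; apply/forallP=> S'; apply/implyP=> dS'.
by rewrite -card_lift -(card_lift S') (implyP (minS _)) ?dominating_lift.
Qed.

Lemma minimum_dominating_unproj (D : {set T}) :
  #|p @: D| = #|D| -> minimum_dominating eU (p @: D) -> minimum_dominating eT D.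
Proof.
move=> cardD /andP[dD /forallP minD].
apply/andP; split; first by rewrite dominating_proj.
apply/forallP=> D'; apply/implyP=> dD'.
rewrite -cardD (leq_trans _ (leq_imset_card p D')) //.
by rewrite (implyP (minD _)) -?dominating_proj.
Qed.

Lemma well_dominated_proj : well_dominated eT <-> well_dominated eU.
Proof.
split=> wd D minD.
  exact/minimum_dominating_unlift/wd/minimal_dominating_lift.
apply: minimum_dominating_unproj; first exact: card_proj_minimal_dominating.
exact/wd/minimal_dominating_proj.
Qed.

End ClosedNeighbourhoodProjection.

Lemma closed_adj_strong_prod_complete (n : nat) (H : finType) (eH : rel H)
    (x y : 'I_n * H) :
  closed_adj (strong_prod (@complete_rel n) eH) x y = closed_adj eH x.2 y.2.
Proof.
rewrite /closed_adj /strong_prod /complete_rel.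
have [-> | neq_xy] := eqVneq x y; first by rewrite !eqxx.
by rewrite /= orbN.
Qed.

(* The argument works for any relation eH. *)
Theorem theorem4 (n : nat) (H : finType) (eH : rel H) :
  0 < n -> simple_graph eH ->
  (well_dominated (strong_prod (@complete_rel n) eH) <-> well_dominated eH).
Proof.
move=> n_gt0 _.
apply: (@well_dominated_proj _ _ _ _ snd (pair (Ordinal n_gt0))) => //.
exact: closed_adj_strong_prod_complete.
Qed.
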